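(* Let $m\ge 3$ be odd, $n\ge2$, and let $\mathcal{A}=(a_{i_1\dots i_m})$ be a real symmetric $m$th order $n$-dimensional tensor which is strongly positive semi-definite. Then $a_{i_1\dots i_m}\ge 0$ whenever at least $m-1$ of the indices $i_1,\dots,i_m$ are equal. If furthermore $\mathcal{A}$ is strongly positive definite, then $a_{i_1\dots i_m}>0$ whenever at least $m-1$ of the indices $i_1,\dots,i_m$ are equal.
   Context: For $\mathbf{x}\in\mathbb{R}^n$, $\mathcal{A}\mathbf{x}^{m-1}$ is the vector with $i$th component $\sum_{i_2,\dots,i_m=1}^n a_{ii_2\dots i_m}x_{i_2}\cdots x_{i_m}$. For odd $m$ and symmetric $\mathcal{A}$, $\mathcal{A}$ is strongly positive semi-definite if $\mathcal{A}\mathbf{x}^{m-1}\ge\mathbf{0}$ componentwise for all $\mathbf{x}\in\mathbb{R}^n$, and strongly positive definite if $\mathcal{A}\mathbf{x}^{m-1}>\mathbf{0}$ componentwise for all nonzero $\mathbf{x}\in\mathbb{R}^n$. *)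

From mathcomp Require Import all_boot all_order all_algebra all_fingroup.
Set Implicit Arguments. Unset Strict Implicit. Unset Printing Implicit Defensive.
Import Order.TTheory GRing.Theory Num.Theory.
Local Open Scope ring_scope.

Definition tensor (R : Type) (m n : nat) := m.-tuple 'I_n -> R.

Definition symmetric_tensor (R : Type) (m n : nat) (A : tensor R m n) : Prop :=
  forall (s : 'S_m) (t : m.-tuple 'I_n),
    A [tuple tnth t (s k) | k < m] = A t.

(* (A x^{m-1})_i = sum_{i_2..i_m} a_{i i_2 .. i_m} x_{i_2} ... x_{i_m}  (for m >= 1) *)
Definition tensor_apply (R : nzRingType) (m n : nat)
    (A : tensor R m.+1 n) (x : 'I_n -> R) (i : 'I_n) : R :=
  \sum_(t : m.-tuple 'I_n) A [tuple of i :: t] * \prod_(k < m) x (tnth t k).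

Definition strongly_psd (R : numDomainType) (m n : nat) (A : tensor R m.+1 n) : Prop :=
  forall x : 'I_n -> R, forall i : 'I_n, 0 <= tensor_apply A x i.

Definition strongly_pd (R : numDomainType) (m n : nat) (A : tensor R m.+1 n) : Prop :=
  forall x : 'I_n -> R, (exists j, x j != 0) -> forall i : 'I_n, 0 < tensor_apply A x i.

Definition at_least_equal (m n : nat) (p : nat) (t : m.-tuple 'I_n) : Prop :=
  exists j : 'I_n, (p <= #|[set k : 'I_m | tnth t k == j]|)%N.

(* The i-th component of A e_j^{m-1}, for e_j the j-th standard basis vector,
   is exactly the entry a_{i j ... j}; and by symmetry every entry with m-1
   equal indices can be brought to this form.  Hence both sign conditions are
   read off from A e_j^{m-1}. *)

From mathcomp Require Import all_boot all_order all_algebra all_fingroup.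
From mathcomp Require Import zify.

Set Implicit Arguments.
Unset Strict Implicit.
Unset Printing Implicit Defensive.
Import Order.TTheory GRing.Theory Num.Theory.
Local Open Scope ring_scope.

Definition basis_vec (R : nzRingType) (n : nat) (j : 'I_n) : 'I_n -> R :=
  fun i => (i == j)%:R.

Lemma basis_vec_neq0 (R : nzRingType) (n : nat) (j : 'I_n) :
  exists i, basis_vec R j i != 0.
Proof. by exists j; rewrite /basis_vec eqxx oner_neq0. Qed.

Lemma prod_basis_vec (R : nzRingType) (k n : nat) (j : 'I_n) (t : k.-tuple 'I_n) :
  \prod_(q < k) basis_vec R j (tnth t q) = (t == nseq_tuple k j)%:R.
Proof.
rewrite -natr_prod; congr _%:R; have [-> | t_neq] := eqVneq t (nseq_tuple k j).
  by apply: big1 => q _; rewrite tnth_nseq eqxx.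
have [q tq_neq] : exists q, tnth t q != j.
  apply/existsP; rewrite -negb_forall; apply: contra t_neq => /forallP tj.
  by apply/eqP/eq_from_tnth => q; rewrite tnth_nseq; apply/eqP.
by rewrite (bigD1 q) //= (negbTE tq_neq).
Qed.

Lemma tensor_apply_basis_vec (R : nzRingType) (k n : nat)
    (A : tensor R k.+1 n) (i j : 'I_n) :
  tensor_apply A (basis_vec R j) i = A [tuple of i :: nseq_tuple k j].
Proof.
rewrite /tensor_apply (bigD1 (nseq_tuple k j)) //= prod_basis_vec eqxx mulr1.
by rewrite big1 ?addr0 // => t t_neq; rewrite prod_basis_vec (negbTE t_neq) mulr0.
Qed.

Lemma at_least_equal_all_but_one (k n : nat) (t : k.+1.-tuple 'I_n) :
  at_least_equal k t -> exists p j, forall q, q != p -> tnth t q = j.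
Proof.
move=> [j]; set S := [set q | tnth t q == j] => kS.
have le1_notS : (#|~: S| <= 1)%N by move: (cardsC S) kS; rewrite card_ord; lia.
have [p notSp | notS] := pickP (mem (~: S)).
  exists p, j => q q_neq; apply/eqP; apply: contraNT q_neq => tq_neq.
  by move/card_le1P/(_ p notSp q): le1_notS; rewrite !inE tq_neq.
by exists ord0, j => q _; have := notS q; rewrite !inE => /negbFE/eqP.
Qed.

Lemma tperm0_all_but_one (T : Type) (k : nat) (t : k.+1.-tuple T) p j :
    (forall q, q != p -> tnth t q = j) ->
  [tuple tnth t (tperm ord0 p q) | q < k.+1] = [tuple of tnth t p :: nseq_tuple k j].
Proof.
move=> tj; apply: eq_from_tnth => -[[|q] lt_q]; rewrite tnth_mktuple.
  by rewrite (_ : Ordinal lt_q = ord0) ?tpermL //; apply: val_inj.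
rewrite [in RHS](tnth_nth j) /= nth_nseq if_same; apply: tj.
by rewrite -[p in _ != p](tpermL ord0 p) (inj_eq perm_inj).
Qed.

Lemma symmetric_tensor_at_least_equal (R : Type) (k n : nat) (A : tensor R k.+1 n)
    (t : k.+1.-tuple 'I_n) :
  symmetric_tensor A -> at_least_equal k t ->
  exists i j, A t = A [tuple of i :: nseq_tuple k j].
Proof.
move=> symA /at_least_equal_all_but_one [p [j tj]]; exists (tnth t p), j.
by rewrite -(tperm0_all_but_one tj) symA.
Qed.

Lemma strongly_psd_entry_ge0 (R : numDomainType) (k n : nat) (A : tensor R k.+1 n)
    (t : k.+1.-tuple 'I_n) :
  symmetric_tensor A -> strongly_psd A -> at_least_equal k t -> 0 <= A t.
Proof.
move=> symA psdA /(symmetric_tensor_at_least_equal symA) [i [j ->]].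
by rewrite -tensor_apply_basis_vec.
Qed.

Lemma strongly_pd_entry_gt0 (R : numDomainType) (k n : nat) (A : tensor R k.+1 n)
    (t : k.+1.-tuple 'I_n) :
  symmetric_tensor A -> strongly_pd A -> at_least_equal k t -> 0 < A t.
Proof.
move=> symA pdA /(symmetric_tensor_at_least_equal symA) [i [j ->]].
by rewrite -tensor_apply_basis_vec; apply/pdA/basis_vec_neq0.
Qed.

(* The paper's order m is written here as k.+1 (so k = m - 1). *)
Theorem proposition3p2 (R : realFieldType) (k n : nat)
    (Hm_odd : odd k.+1) (Hm3 : (3 <= k.+1)%N) (Hn : (2 <= n)%N)
    (A : tensor R k.+1 n) (Hsym : symmetric_tensor A) :
  (strongly_psd A ->
     forall t : k.+1.-tuple 'I_n, at_least_equal k t -> 0 <= A t)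
  /\
  (strongly_pd A ->
     forall t : k.+1.-tuple 'I_n, at_least_equal k t -> 0 < A t).
Proof.
split=> [psdA t | pdA t].
  exact: strongly_psd_entry_ge0.
exact: strongly_pd_entry_gt0.
Qed.
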